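(* Let $q\in\,]0,1[$, $\omega\ge 0$, let $I$ be an interval containing $\omega_0:=\omega/(1-q)$, let $s\in I$, $\bar\theta>0$, $\theta_0\in\,]-\bar\theta,\bar\theta[$, and let $g:I\times\,]-\bar\theta,\bar\theta[\,\to\mathbb{R}$ be such that $g(t,\cdot)$ is differentiable at $\theta_0$ uniformly in $[s]_{q,\omega}$. If $\int_{\omega_0}^s g(t,\theta_0)\,\tilde d_{q,\omega}t$ exists, then $G(\theta):=\int_{\omega_0}^s g(t,\theta)\,\tilde d_{q,\omega}t$, for $\theta$ near $\theta_0$, is differentiable at $\theta_0$ with $$G'(\theta_0)=\int_{\omega_0}^s\partial_2 g(t,\theta_0)\,\tilde d_{q,\omega}t.$$
   Context: $\sigma(t):=qt+\omega$, $\sigma^{-1}(t):=q^{-1}(t-\omega)$, $\sigma^k$ is the $k$-fold composition of $\sigma$; $[s]_{q,\omega}:=\{\sigma^{2n+1}(s):n\in\mathbb{N}_0\}\cup\{\omega_0\}$. $g(t,\cdot)$ is differentiable at $\theta_0$ uniformly in $[s]_{q,\omega}$ if for every $\varepsilon>0$ there is $\delta>0$ such that $0<|\theta-\theta_0|<\delta$ implies $\left|\frac{g(t,\theta)-g(t,\theta_0)}{\theta-\theta_0}-\partial_2 g(t,\theta_0)\right|<\varepsilon$ for all $t\in[s]_{q,\omega}$, where $\partial_2 g=\partial g/\partial\theta$. Hahn symmetric integral: $\int_{\omega_0}^x F(t)\,\tilde d_{q,\omega}t:=(\sigma^{-1}(x)-\sigma(x))\sum_{n=0}^\infty q^{2n+1}F(\sigma^{2n+1}(x))$,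 existing when the series converges. *)

From Stdlib Require Import Reals.
From Coquelicot Require Import Coquelicot.
Open Scope R_scope.

Definition sigma (q w t : R) : R := q * t + w.
Definition sigma_inv (q w t : R) : R := (t - w) / q.
Fixpoint sigma_iter (q w : R) (k : nat) (t : R) : R :=
  match k with
  | O => t
  | S k' => sigma q w (sigma_iter q w k' t)
  end.

Definition omega0 (q w : R) : R := w / (1 - q).

Definition orbit_set (q w s t : R) : Prop :=
  (exists n : nat, t = sigma_iter q w (2 * n + 1) s) \/ t = omega0 q w.

Definition is_interval (I : R -> Prop) : Prop :=
  forall a b c, I a -> I b -> a <= c -> c <= b -> I c.

Definition hahn_term (q w : R) (F : R -> R) (x : R) (n : nat) : R :=
  q ^ (2 * n + 1) * F (sigma_iter q w (2 * n + 1) x).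

Definition hahn_sym_int_exists (q w : R) (F : R -> R) (x : R) : Prop :=
  ex_series (hahn_term q w F x).

Definition hahn_sym_int (q w : R) (F : R -> R) (x : R) : R :=
  (sigma_inv q w x - sigma q w x) * Series (hahn_term q w F x).

(* g(t,.) is differentiable at th0 uniformly in [s]_{q,omega}, with
   partial derivative d2g t (= dg/dtheta (t, th0)); theta ranges over
   the domain ]-thb, thb[ of the second variable. *)
Definition unif_diff_at (q w s thb : R) (g : R -> R -> R) (th0 : R)
    (d2g : R -> R) : Prop :=
  forall eps : R, 0 < eps -> exists delta : R, 0 < delta /\
    forall th : R, - thb < th < thb -> 0 < Rabs (th - th0) < delta ->
      forall t : R, orbit_set q w s t ->
        Rabs ((g t th - g t th0) / (th - th0) - d2g t) < eps.

From Pilot Require Import Defs.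
From Stdlib Require Import Reals Lra.
From Coquelicot Require Import Coquelicot.
Open Scope R_scope.

(* The weights q^(2n+1) of the Hahn symmetric integral form a convergent
   series, so a function bounded by M on [s]_{q,omega} is integrable with
   integral at most |sigma^-1(s) - sigma(s)| q/(1-q^2) M.  Uniform
   differentiability makes the error of the difference quotient of g(., theta)
   bounded by any eps on [s]_{q,omega} for theta close to theta0; by linearity
   of the integral, the error of the difference quotient of G is the integral
   of that error, hence O(eps). *)

Section HahnSymInt.

Variables q w : R.

Lemma orbit_set_iter (s : R) (n : nat) :
  orbit_set q w s (sigma_iter q w (2 * n + 1) s).
Proof. left; exists n; reflexivity. Qed.

Lemma hahn_sym_int_exists_ext (F G : R -> R) (s : R) :
  (forall t, F t = G t) ->
  hahn_sym_int_exists q w F s -> hahn_sym_int_exists q w G s.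
Proof.
  intros HFG. apply ex_series_ext; intros n.
  unfold hahn_term; rewrite HFG; reflexivity.
Qed.

Lemma hahn_sym_int_ext (F G : R -> R) (s : R) :
  (forall t, F t = G t) -> hahn_sym_int q w F s = hahn_sym_int q w G s.
Proof.
  intros HFG. unfold hahn_sym_int; f_equal.
  apply Series_ext; intros n. unfold hahn_term; rewrite HFG; reflexivity.
Qed.

Lemma hahn_sym_int_exists_minus (F G : R -> R) (s : R) :
  hahn_sym_int_exists q w F s -> hahn_sym_int_exists q w G s ->
  hahn_sym_int_exists q w (fun t => F t - G t) s.
Proof.
  intros HF HG. eapply ex_series_ext; [|exact (ex_series_minus _ _ HF HG)].
  intros n. unfold hahn_term; simpl. change plus with Rplus. change opp with Ropp.
  ring.
Qed.

Lemma hahn_sym_int_exists_scal (c : R) (F : R -> R) (s : R) :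
  hahn_sym_int_exists q w F s ->
  hahn_sym_int_exists q w (fun t => c * F t) s.
Proof.
  intros HF. eapply ex_series_ext; [|exact (ex_series_scal_l c _ HF)].
  intros n. unfold hahn_term; simpl. change scal with Rmult. ring.
Qed.

Lemma hahn_sym_int_minus (F G : R -> R) (s : R) :
  hahn_sym_int_exists q w F s -> hahn_sym_int_exists q w G s ->
  hahn_sym_int q w (fun t => F t - G t) s =
  hahn_sym_int q w F s - hahn_sym_int q w G s.
Proof.
  intros HF HG. unfold hahn_sym_int. rewrite <- Rmult_minus_distr_l, <- Series_minus by assumption.
  f_equal. apply Series_ext; intros n. unfold hahn_term; ring.
Qed.

Lemma hahn_sym_int_scal (c : R) (F : R -> R) (s : R) :
  hahn_sym_int q w (fun t => c * F t) s = c * hahn_sym_int q w F s.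
Proof.
  unfold hahn_sym_int. rewrite <- (Series_ext (fun n => c * hahn_term q w F s n)).
  - rewrite Series_scal_l; ring.
  - intros n; unfold hahn_term; ring.
Qed.

Section DifferenceQuotient.

Variables (s th0 : R) (g : R -> R -> R) (D : R -> R).

Definition diff_quot_err (h t : R) : R := (g t (th0 + h) - g t th0) / h - D t.

Lemma hahn_sym_int_exists_of_diff_quot_err (h : R) :
  hahn_sym_int_exists q w (fun t => g t (th0 + h)) s ->
  hahn_sym_int_exists q w (fun t => g t th0) s ->
  hahn_sym_int_exists q w (diff_quot_err h) s ->
  hahn_sym_int_exists q w D s.
Proof.
  intros Hh H0 Herr.
  apply hahn_sym_int_exists_ext
    with (fun t => / h * (g t (th0 + h) - g t th0) - diff_quot_err h t).
  { intros t; unfold diff_quot_err, Rdiv; ring. }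
  apply hahn_sym_int_exists_minus; [|exact Herr].
  apply hahn_sym_int_exists_scal, hahn_sym_int_exists_minus; assumption.
Qed.

Lemma hahn_sym_int_diff_quot (h : R) : h <> 0 ->
  hahn_sym_int_exists q w (fun t => g t (th0 + h)) s ->
  hahn_sym_int_exists q w (fun t => g t th0) s ->
  hahn_sym_int_exists q w D s ->
  (hahn_sym_int q w (fun t => g t (th0 + h)) s -
     hahn_sym_int q w (fun t => g t th0) s) / h - hahn_sym_int q w D s =
  hahn_sym_int q w (diff_quot_err h) s.
Proof.
  intros Hh0 Hh H0 HD.
  rewrite (hahn_sym_int_ext (diff_quot_err h)
             (fun t => / h * (g t (th0 + h) - g t th0) - D t))
    by (intros t; unfold diff_quot_err, Rdiv; ring).
  rewrite hahn_sym_int_minus, hahn_sym_int_scal, hahn_sym_int_minus by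
    (try apply hahn_sym_int_exists_scal, hahn_sym_int_exists_minus; assumption).
  unfold Rdiv; ring.
Qed.

Lemma unif_diff_at_diff_quot_err (thb r : R) :
  - thb < th0 < thb -> 0 < r ->
  unif_diff_at q w s thb g th0 D ->
  (forall th, Rabs (th - th0) < r -> hahn_sym_int_exists q w (fun t => g t th) s) ->
  forall eps, 0 < eps -> exists delta, 0 < delta /\
    forall h, h <> 0 -> Rabs h < delta ->
      hahn_sym_int_exists q w (fun t => g t (th0 + h)) s /\
      forall t, orbit_set q w s t -> Rabs (diff_quot_err h t) <= eps.
Proof.
  intros Hth0 Hr Hud Hexr eps Heps.
  destruct (Hud eps Heps) as [delta [Hdelta Hd]].
  exists (Rmin (Rmin delta r) (Rmin (thb - th0) (thb + th0))).
  split; [repeat apply Rmin_pos; lra|].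
  intros h Hh0 Hh.
  assert (Hh' : Rabs h < delta /\ Rabs h < r /\ Rabs h < thb - th0 /\ Rabs h < thb + th0).
  { repeat split; eapply Rlt_le_trans; try exact Hh;
      eauto using Rle_trans, Rmin_l, Rmin_r. }
  assert (Hshift : th0 + h - th0 = h) by ring.
  split.
  - apply Hexr. rewrite Hshift; lra.
  - intros t Ht. unfold diff_quot_err. rewrite <- Hshift at 2. left. apply Hd; auto.
    + pose proof (Rle_abs h); pose proof (Rabs_maj2 h); lra.
    + rewrite Hshift. split; [apply Rabs_pos_lt|]; tauto.
Qed.

End DifferenceQuotient.

Hypothesis Hq : 0 < q < 1.

Lemma is_series_odd_pow : is_series (fun n => q ^ (2 * n + 1)) (q / (1 - q ^ 2)).
Proof.
  apply is_series_ext with (fun n => q * (q ^ 2) ^ n).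
  { intros n. rewrite pow_add, <- pow_mult. simpl. ring. }
  apply (is_series_scal_l q (fun n => (q ^ 2) ^ n) (/ (1 - q ^ 2))).
  apply is_series_geom. rewrite Rabs_right; simpl; nra.
Qed.

Section Bounded.

Variables (F : R -> R) (s M : R).
Hypothesis HM : forall t, orbit_set q w s t -> Rabs (F t) <= M.

Lemma Rabs_hahn_term_le (n : nat) :
  Rabs (hahn_term q w F s n) <= M * q ^ (2 * n + 1).
Proof.
  unfold hahn_term. rewrite Rabs_mult, Rmult_comm, (Rabs_right (q ^ _)).
  - apply Rmult_le_compat_r; [apply pow_le; lra|]. apply HM, orbit_set_iter.
  - apply Rle_ge, pow_le; lra.
Qed.

Lemma ex_series_Rabs_hahn_term_bounded :
  ex_series (fun n => Rabs (hahn_term q w F s n)).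
Proof.
  apply (@ex_series_le R_AbsRing R_CompleteNormedModule)
    with (fun n => M * q ^ (2 * n + 1)).
  - intros n. unfold norm; simpl. rewrite Rabs_Rabsolu. apply Rabs_hahn_term_le.
  - eexists. exact (is_series_scal_l M _ _ is_series_odd_pow).
Qed.

Lemma hahn_sym_int_exists_bounded : hahn_sym_int_exists q w F s.
Proof. apply ex_series_Rabs, ex_series_Rabs_hahn_term_bounded. Qed.

Lemma Rabs_hahn_sym_int_le :
  Rabs (hahn_sym_int q w F s) <=
  Rabs (sigma_inv q w s - Defs.sigma q w s) * (q / (1 - q ^ 2)) * M.
Proof.
  unfold hahn_sym_int. rewrite Rabs_mult, Rmult_assoc.
  apply Rmult_le_compat_l; [apply Rabs_pos|].
  eapply Rle_trans; [apply Series_Rabs, ex_series_Rabs_hahn_term_bounded|].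
  rewrite Rmult_comm, <- (is_series_unique _ _ is_series_odd_pow), <- Series_scal_l.
  apply Series_le.
  - intros n; split; [apply Rabs_pos|apply Rabs_hahn_term_le].
  - eexists; exact (is_series_scal_l M _ _ is_series_odd_pow).
Qed.

End Bounded.

End HahnSymInt.

Theorem lemma3p6 (q w : R) (I : R -> Prop) (s thb th0 : R)
  (g : R -> R -> R) :
  0 < q < 1 -> 0 <= w ->
  is_interval I -> I (omega0 q w) -> I s ->
  0 < thb -> - thb < th0 < thb ->
  unif_diff_at q w s thb g th0 (fun t => Derive (fun th => g t th) th0) ->
  hahn_sym_int_exists q w (fun t => g t th0) s ->
  (* G(theta) is defined for theta near theta0 *)
  (exists r : R, 0 < r /\ forall th : R, Rabs (th - th0) < r ->
      hahn_sym_int_exists q w (fun t => g t th) s) ->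
  hahn_sym_int_exists q w (fun t => Derive (fun th => g t th) th0) s /\
  is_derive (fun th => hahn_sym_int q w (fun t => g t th) s) th0
    (hahn_sym_int q w (fun t => Derive (fun th => g t th) th0) s).
Proof.
  (* g is total. *)
  intros Hq _ _ _ _ _ Hth0 Hud Hex0 [r [Hr Hexr]].
  set (D := fun t => Derive (fun th => g t th) th0).
  pose proof (unif_diff_at_diff_quot_err q w s th0 g D thb r Hth0 Hr Hud Hexr) as Hnear.
  assert (HexD : hahn_sym_int_exists q w D s).
  { destruct (Hnear 1 Rlt_0_1) as [delta [Hdelta Hd]].
    destruct (Hd (delta / 2)) as [Hexh Herr]; [lra|rewrite Rabs_right; lra|].
    apply (hahn_sym_int_exists_of_diff_quot_err q w s th0 g D (delta / 2)); auto.
    eapply hahn_sym_int_exists_bounded; eauto. }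
  split; [exact HexD|].
  set (C := Rabs (sigma_inv q w s - Defs.sigma q w s) * (q / (1 - q ^ 2))).
  assert (HC : 0 <= C).
  { apply Rmult_le_pos; [apply Rabs_pos|]. apply Rmult_le_pos; [lra|].
    left; apply Rinv_0_lt_compat; simpl; nra. }
  apply is_derive_Reals; intros eps Heps.
  destruct (Hnear (eps / (C + 1))) as [delta [Hdelta Hd]];
    [apply Rdiv_lt_0_compat; lra|].
  exists (mkposreal delta Hdelta); intros h Hh0 Hh; simpl in Hh.
  destruct (Hd h Hh0 Hh) as [Hexh Herr].
  rewrite (hahn_sym_int_diff_quot q w s th0 g D h) by assumption.
  eapply Rle_lt_trans; [exact (Rabs_hahn_sym_int_le q w Hq _ s _ Herr)|].
  fold C. apply Rlt_le_trans with ((C + 1) * (eps / (C + 1))).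
  - apply Rmult_lt_compat_r; [apply Rdiv_lt_0_compat|]; lra.
  - right; field; lra.
Qed.
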